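(* Let $I\subseteq\mathbb{R}$ be an interval and let $f,g\in C^2(I)$ with $g''(t)>0$ for all $t\in I$. For $a,b\in I$, $a\neq b$, put $$\Lambda_{f,g}(a,b)=\frac{f(a)+f(b)-2f\left(\frac{a+b}{2}\right)}{g(a)+g(b)-2g\left(\frac{a+b}{2}\right)}.$$ Then the inequality $\min\{a,b\}\le \Lambda_{f,g}(a,b)\le \max\{a,b\}$ holds for all $a,b\in I$ with $a\ne b$ if and only if $f''(t)=t\,g''(t)$ for every $t\in I$.
   Context: Since $g''>0$, the function $g$ is strictly convex on $I$, so the denominator $g(a)+g(b)-2g((a+b)/2)$ is strictly positive for $a\neq b$. *)

From Stdlib Require Import Reals Lra.
Open Scope R_scope.

Definition is_interval (I : R -> Prop) : Prop :=
  forall x y z, I x -> I y -> x <= z <= y -> I z.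

Definition nondegenerate (I : R -> Prop) : Prop :=
  exists a b, I a /\ I b /\ a < b.

(* f has derivative l at x relative to I (one-sided at endpoints). *)
Definition deriv_within (I : R -> Prop) (f : R -> R) (l x : R) : Prop :=
  limit1_in (fun y => (f y - f x) / (y - x)) (fun y => I y /\ y <> x) l x.

Definition continuous_within (I : R -> Prop) (h : R -> R) (x : R) : Prop :=
  limit1_in h I (h x) x.

Definition C2_on (I : R -> Prop) (f f1 f2 : R -> R) : Prop :=
  (forall x, I x -> deriv_within I f (f1 x) x) /\
  (forall x, I x -> deriv_within I f1 (f2 x) x) /\
  (forall x, I x -> continuous_within I f2 x).

Definition Lambda (f g : R -> R) (a b : R) : R :=
  (f a + f b - 2 * f ((a + b) / 2)) / (g a + g b - 2 * g ((a + b) / 2)).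

(* Write  sdiff h a b = h a + h b - 2 h((a+b)/2)  for the second
   difference, so that  Lambda f g a b = sdiff f a b / sdiff g a b.  Applying the
   mean value theorem three times (on [a,m], [m,b] with m the midpoint, and then
   to h' between the two intermediate points) shows that sdiff h a b is a
   positive multiple of h''(z) for some z in (a,b).  Applied to g this gives
   sdiff g a b > 0, and applied to f - c g it gives the key identity
        Lambda f g a b - c = (f''(z) - c g''(z)) * e,   a < z < b,  e > 0.
   If f'' = t g'', taking c = a resp. c = b yields a <= Lambda <= b.  Conversely,
   if f''(t) <> t g''(t), choose c strictly between f''(t)/g''(t) and t; by
   continuity f'' - c g'' keeps its sign near t, and for a < b close enough to t
   the key identity puts Lambda on the wrong side of c, hence outside [a,b]. *)
From Stdlib Require Import Reals Lra.
Open Scope R_scope.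

Lemma limit1_in_ext (F G : R -> R) (D : R -> Prop) (l x : R) :
  (forall y, D y -> F y = G y) -> limit1_in F D l x -> limit1_in G D l x.
Proof.
  intros Heq Hlim eps Heps. destruct (Hlim eps Heps) as [alp [Halp Hclose]].
  exists alp; split; [exact Halp|].
  intros y [Dy Hy]. rewrite <- Heq by exact Dy. apply Hclose; auto.
Qed.

Lemma deriv_within_sub_scal (I : R -> Prop) (f g : R -> R) (l m c x : R) :
  deriv_within I f l x -> deriv_within I g m x ->
  deriv_within I (fun y => f y - c * g y) (l - c * m) x.
Proof.
  intros Hf Hg. unfold deriv_within in *.
  apply limit1_in_ext with
    (F := fun y => (f y - f x) / (y - x) - (fun _ => c) y * ((g y - g x) / (y - x))).
  - intros y [_ Hy]. field. lra.
  - apply limit_minus; [exact Hf|]. apply limit_mul; [|exact Hg].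
    apply (limit_free (fun _ => c) _ x x).
Qed.

Lemma continuous_within_sub_scal (I : R -> Prop) (f g : R -> R) (c x : R) :
  continuous_within I f x -> continuous_within I g x ->
  continuous_within I (fun y => f y - c * g y) x.
Proof.
  intros Hf Hg. apply limit_minus; [exact Hf|].
  apply limit_mul; [apply (limit_free (fun _ => c) _ x x)|exact Hg].
Qed.

Lemma deriv_within_continuous (I : R -> Prop) (h : R -> R) (l x : R) :
  deriv_within I h l x -> continuous_within I h x.
Proof.
  intros Hd eps Heps. destruct (Hd 1 Rlt_0_1) as [alp [Halp Hclose]].
  assert (Hpos : 0 < Rabs l + 1) by (pose proof (Rabs_pos l); lra).
  set (r := Rmin alp (eps / (Rabs l + 1))).
  assert (Hr1 : r <= alp) by apply Rmin_l.
  assert (Hr2 : r <= eps / (Rabs l + 1)) by apply Rmin_r.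
  exists r. split; [apply Rmin_pos; [lra|apply Rdiv_lt_0_compat; lra]|].
  intros y [Iy Hy]. simpl in *. unfold R_dist in *.
  destruct (Req_dec y x) as [->|Hne].
  { replace (h x - h x) with 0 by ring. rewrite Rabs_R0. exact Heps. }
  assert (Hyalp : Rabs (y - x) < alp) by lra.
  specialize (Hclose y (conj (conj Iy Hne) Hyalp)). simpl in Hclose.
  unfold R_dist in Hclose.
  set (q := (h y - h x) / (y - x)) in *.
  assert (Hq : Rabs q < Rabs l + 1).
  { replace q with ((q - l) + l) by ring. pose proof (Rabs_triang (q - l) l). lra. }
  assert (Hsmall : Rabs (y - x) * (Rabs l + 1) < eps).
  { apply Rmult_lt_reg_r with (/ (Rabs l + 1)); [apply Rinv_0_lt_compat; lra|].
    rewrite Rmult_assoc, Rinv_r by lra. lra. }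
  replace (h y - h x) with (q * (y - x)) by (unfold q; field; lra).
  rewrite Rabs_mult. pose proof (Rabs_pos (y - x)). pose proof (Rabs_pos q). nra.
Qed.

Definition clamp (a b y : R) : R := Rmax a (Rmin b y).

Lemma clamp_id (a b y : R) : a <= y <= b -> clamp a b y = y.
Proof. intros. unfold clamp, Rmax, Rmin. repeat destruct Rle_dec; lra. Qed.

Lemma clamp_contract (a b c y : R) : a <= c <= b ->
  a <= clamp a b y <= b /\ Rabs (clamp a b y - c) <= Rabs (y - c).
Proof.
  intros Hc. unfold clamp, Rmax, Rmin, Rabs.
  repeat (destruct Rle_dec || destruct Rcase_abs); lra.
Qed.

(* Mean value theorem for functions differentiable within an interval; it is
   reduced to the Stdlib MVT for the extension h o clamp a b. *)
Lemma mvt_within (I : R -> Prop) (h h1 : R -> R) (a b : R) :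
  is_interval I -> I a -> I b -> a < b ->
  (forall x, I x -> deriv_within I h (h1 x) x) ->
  exists c, a < c < b /\ h b - h a = h1 c * (b - a).
Proof.
  intros HI Ia Ib Hab Hd.
  set (G := fun y => h (clamp a b y)).
  assert (Hder : forall c, a < c < b -> derivable_pt_lim G c (h1 c)).
  { intros c Hc eps Heps.
    destruct (Hd c (HI a b c Ia Ib ltac:(lra)) eps Heps) as [alp [Halp Hclose]].
    set (r := Rmin alp (Rmin (c - a) (b - c))).
    assert (Hr : 0 < r) by (repeat apply Rmin_pos; lra).
    pose proof (Rmin_l alp (Rmin (c - a) (b - c))).
    pose proof (Rmin_r alp (Rmin (c - a) (b - c))).
    pose proof (Rmin_l (c - a) (b - c)). pose proof (Rmin_r (c - a) (b - c)).
    exists (mkposreal r Hr). intros k Hk0 Hk. simpl in Hk.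
    assert (Hkr : - r < k < r) by (unfold Rabs in Hk; destruct Rcase_abs; lra).
    unfold G. rewrite !clamp_id by (unfold r in *; lra).
    assert (Ick : I (c + k)) by (apply (HI a b); auto; unfold r in *; lra).
    assert (Hdist : R_dist (c + k) c < alp).
    { unfold R_dist. replace (c + k - c) with k by ring. unfold r in *; lra. }
    assert (Hck : c + k <> c) by lra.
    specialize (Hclose (c + k) (conj (conj Ick Hck) Hdist)).
    simpl in Hclose. unfold R_dist in Hclose.
    replace (c + k - c) with k in Hclose by ring. exact Hclose. }
  assert (Hcont : forall c, a <= c <= b -> continuity_pt G c).
  { intros c Hc eps Heps.
    destruct (deriv_within_continuous I h (h1 c) c (Hd c (HI a b c Ia Ib Hc))
                eps Heps) as [d [Hd0 Hclose]].
    exists d; split; [exact Hd0|]. intros y [_ Hy]. simpl in *. unfold R_dist in *.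
    unfold G. rewrite (clamp_id a b c) by lra.
    destruct (clamp_contract a b c y Hc) as [Hin Hle].
    apply Hclose. split; [apply (HI a b); auto|]. lra. }
  set (pr := fun c (P : a < c < b) =>
    exist (fun l => derivable_pt_abs G c l) (h1 c) (Hder c P)).
  destruct (MVT G id a b pr (fun c _ => derivable_pt_id c) Hab Hcont
    (fun c _ => derivable_continuous_pt id c (derivable_pt_id c))) as [c [Hc Heq]].
  exists c; split; [exact Hc|].
  rewrite derive_pt_id in Heq. simpl in Heq. unfold id, G in Heq.
  rewrite !clamp_id in Heq by lra. lra.
Qed.

Definition sdiff (h : R -> R) (a b : R) : R := h a + h b - 2 * h ((a + b) / 2).

Lemma Lambda_sdiff (f g : R -> R) (a b : R) :
  Lambda f g a b = sdiff f a b / sdiff g a b.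
Proof. reflexivity. Qed.

Lemma Lambda_sym (f g : R -> R) (a b : R) : Lambda f g a b = Lambda f g b a.
Proof. unfold Lambda. rewrite (Rplus_comm b a). f_equal; ring. Qed.

Lemma sdiff_mvt (I : R -> Prop) (h h1 h2 : R -> R) (a b : R) :
  is_interval I -> I a -> I b -> a < b ->
  (forall x, I x -> deriv_within I h (h1 x) x) ->
  (forall x, I x -> deriv_within I h1 (h2 x) x) ->
  exists z d, a < z < b /\ 0 < d /\ sdiff h a b = h2 z * d.
Proof.
  intros HI Ia Ib Hab Hd1 Hd2.
  set (m := (a + b) / 2).
  assert (Im : I m) by (apply (HI a b); auto; unfold m; lra).
  destruct (mvt_within I h h1 a m HI Ia Im ltac:(unfold m; lra) Hd1) as [u [Hu Heu]].
  destruct (mvt_within I h h1 m b HI Im Ib ltac:(unfold m; lra) Hd1) as [v [Hv Hev]].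
  assert (Iu : I u) by (apply (HI a b); auto; unfold m in *; lra).
  assert (Iv : I v) by (apply (HI a b); auto; unfold m in *; lra).
  destruct (mvt_within I h1 h2 u v HI Iu Iv ltac:(lra) Hd2) as [z [Hz Hez]].
  exists z, ((v - u) * ((b - a) / 2)).
  split; [unfold m in *; lra|]. split; [apply Rmult_lt_0_compat; lra|].
  (* sdiff h a b = (h b - h m) - (h m - h a) = (h1 v - h1 u) * (b - a)/2 *)
  unfold sdiff. fold m.
  replace (h a + h b - 2 * h m) with ((h b - h m) - (h m - h a)) by ring.
  rewrite Heu, Hev.
  replace (b - m) with ((b - a) / 2) by (unfold m; field).
  replace (m - a) with ((b - a) / 2) by (unfold m; field).
  replace (h2 z * ((v - u) * ((b - a) / 2))) with (h2 z * (v - u) * ((b - a) / 2))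
    by ring.
  rewrite <- Hez. ring.
Qed.

Lemma sdiff_pos (I : R -> Prop) (g g1 g2 : R -> R) (a b : R) :
  is_interval I -> I a -> I b -> a < b -> C2_on I g g1 g2 ->
  (forall t, I t -> 0 < g2 t) -> 0 < sdiff g a b.
Proof.
  intros HI Ia Ib Hab [Hg1 [Hg2 _]] Hpos.
  destruct (sdiff_mvt I g g1 g2 a b HI Ia Ib Hab Hg1 Hg2) as [z [d [Hz [Hd ->]]]].
  apply Rmult_lt_0_compat; [apply Hpos; apply (HI a b); auto; lra|exact Hd].
Qed.

(* Key identity: Lambda - c is a positive multiple of f''(z) - c g''(z) for
   some z in (a,b); it follows from sdiff_mvt applied to f - c g. *)
Lemma Lambda_sub_mvt (I : R -> Prop) (f f1 f2 g g1 g2 : R -> R) (c a b : R) :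
  is_interval I -> I a -> I b -> a < b ->
  C2_on I f f1 f2 -> C2_on I g g1 g2 -> (forall t, I t -> 0 < g2 t) ->
  exists z e, a < z < b /\ 0 < e /\ Lambda f g a b - c = (f2 z - c * g2 z) * e.
Proof.
  intros HI Ia Ib Hab Hf Hg Hpos.
  pose proof (sdiff_pos I g g1 g2 a b HI Ia Ib Hab Hg Hpos) as Hgpos.
  destruct Hf as [Hf1 [Hf2 _]]. destruct Hg as [Hg1 [Hg2 _]].
  destruct (sdiff_mvt I (fun y => f y - c * g y) (fun y => f1 y - c * g1 y)
              (fun y => f2 y - c * g2 y) a b HI Ia Ib Hab)
    as [z [d [Hz [Hd Hlin]]]];
    [intros x Ix; apply deriv_within_sub_scal; auto ..|].
  assert (Hsplit : sdiff (fun y => f y - c * g y) a b = sdiff f a b - c * sdiff g a b)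
    by (unfold sdiff; ring).
  exists z, (d / sdiff g a b). split; [exact Hz|].
  split; [apply Rdiv_lt_0_compat; assumption|].
  rewrite Lambda_sdiff. rewrite Hsplit in Hlin.
  replace (sdiff f a b / sdiff g a b - c)
    with ((sdiff f a b - c * sdiff g a b) / sdiff g a b) by (field; lra).
  rewrite Hlin. field. lra.
Qed.

Lemma continuous_within_sign (I : R -> Prop) (h : R -> R) (t : R) :
  continuous_within I h t -> h t <> 0 ->
  exists r, 0 < r /\ forall s, I s -> Rabs (s - t) < r -> 0 < h s * h t.
Proof.
  intros Hc Hne.
  destruct (Hc (Rabs (h t)) (Rabs_pos_lt _ Hne)) as [r [Hr Hclose]].
  exists r. split; [exact Hr|]. intros s Is Hs.
  specialize (Hclose s (conj Is Hs)). simpl in Hclose. unfold R_dist in Hclose.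
  unfold Rabs in *. repeat destruct Rcase_abs; nra.
Qed.

Lemma points_near (I : R -> Prop) (t r : R) :
  is_interval I -> nondegenerate I -> I t -> 0 < r ->
  exists a b, I a /\ I b /\ a < b /\ Rabs (a - t) < r /\ Rabs (b - t) < r.
Proof.
  intros HI [p [q [Ip [Iq Hpq]]]] It Hr.
  destruct (Rlt_or_le t q) as [Htq|Hqt].
  - set (k := Rmin (r / 2) (q - t)).
    assert (0 < k) by (apply Rmin_pos; lra).
    pose proof (Rmin_l (r / 2) (q - t)). pose proof (Rmin_r (r / 2) (q - t)).
    exists t, (t + k). repeat split; auto.
    + apply (HI t q); auto; unfold k in *; lra.
    + lra.
    + replace (t - t) with 0 by ring. rewrite Rabs_R0. exact Hr.
    + replace (t + k - t) with k by ring. rewrite Rabs_right; unfold k in *; lra.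
  - set (k := Rmin (r / 2) (t - p)).
    assert (0 < k) by (apply Rmin_pos; lra).
    pose proof (Rmin_l (r / 2) (t - p)). pose proof (Rmin_r (r / 2) (t - p)).
    exists (t - k), t. repeat split; auto.
    + apply (HI p t); auto; unfold k in *; lra.
    + lra.
    + replace (t - k - t) with (- k) by ring. rewrite Rabs_Ropp, Rabs_right;
        unfold k in *; lra.
    + replace (t - t) with 0 by ring. rewrite Rabs_R0. exact Hr.
Qed.

Lemma Lambda_sign_near (I : R -> Prop) (f f1 f2 g g1 g2 : R -> R) (c t r : R) :
  is_interval I -> nondegenerate I -> I t -> 0 < r ->
  C2_on I f f1 f2 -> C2_on I g g1 g2 -> (forall s, I s -> 0 < g2 s) ->
  f2 t - c * g2 t <> 0 ->
  exists a b, I a /\ I b /\ a < b /\ Rabs (a - t) < r /\ Rabs (b - t) < r /\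
    0 < (Lambda f g a b - c) * (f2 t - c * g2 t).
Proof.
  intros HI HInd It Hr Hf Hg Hpos Hne.
  assert (Hcont : continuous_within I (fun y => f2 y - c * g2 y) t)
    by (apply continuous_within_sub_scal; [apply Hf | apply Hg]; exact It).
  destruct (continuous_within_sign I _ t Hcont Hne) as [r' [Hr' Hsign]].
  destruct (points_near I t (Rmin r r') HI HInd It ltac:(apply Rmin_pos; lra))
    as [a [b [Ia [Ib [Hab [Ha Hb]]]]]].
  pose proof (Rmin_l r r'). pose proof (Rmin_r r r').
  destruct (Lambda_sub_mvt I f f1 f2 g g1 g2 c a b HI Ia Ib Hab Hf Hg Hpos)
    as [z [e [Hz [He Heq]]]].
  assert (Hzt : Rabs (z - t) < r') by (unfold Rabs in *; repeat destruct Rcase_abs; lra).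
  specialize (Hsign z (HI a b z Ia Ib ltac:(lra)) Hzt).
  exists a, b. repeat split; try assumption; try lra.
  rewrite Heq. simpl in Hsign. nra.
Qed.

Lemma Lambda_between (I : R -> Prop) (f f1 f2 g g1 g2 : R -> R) (a b : R) :
  is_interval I -> I a -> I b -> a < b ->
  C2_on I f f1 f2 -> C2_on I g g1 g2 -> (forall t, I t -> 0 < g2 t) ->
  (forall t, I t -> f2 t = t * g2 t) ->
  a <= Lambda f g a b <= b.
Proof.
  intros HI Ia Ib Hab Hf Hg Hpos Heq.
  destruct (Lambda_sub_mvt I f f1 f2 g g1 g2 a a b HI Ia Ib Hab Hf Hg Hpos)
    as [z [e [Hz [He Ha]]]].
  destruct (Lambda_sub_mvt I f f1 f2 g g1 g2 b a b HI Ia Ib Hab Hf Hg Hpos)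
    as [z' [e' [Hz' [He' Hb]]]].
  pose proof (Hpos z (HI a b z Ia Ib ltac:(lra))).
  pose proof (Hpos z' (HI a b z' Ia Ib ltac:(lra))).
  rewrite Heq in Ha, Hb by (apply (HI a b); auto; lra).
  (* Lambda - a = (z - a) g''(z) e >= 0  and  b - Lambda = (b - z') g''(z') e' >= 0 *)
  assert (0 <= (z - a) * g2 z * e) by (repeat apply Rmult_le_pos; lra).
  assert (0 <= (b - z') * g2 z' * e') by (repeat apply Rmult_le_pos; lra).
  split; nra.
Qed.

(* Otherwise pick c strictly between f''(t)/g''(t) and t and
   apply Lambda_sign_near within distance |t - c| of t. *)
Lemma f2_eq_of_Lambda_between (I : R -> Prop) (f f1 f2 g g1 g2 : R -> R) :
  is_interval I -> nondegenerate I ->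
  C2_on I f f1 f2 -> C2_on I g g1 g2 -> (forall t, I t -> 0 < g2 t) ->
  (forall a b, I a -> I b -> a < b -> a <= Lambda f g a b <= b) ->
  forall t, I t -> f2 t = t * g2 t.
Proof.
  intros HI HInd Hf Hg Hg2 Hbd t It.
  destruct (Req_dec (f2 t) (t * g2 t)) as [Heq|Hne]; [exact Heq|exfalso].
  pose proof (Hg2 t It) as Hgt.
  (* c lies strictly between f''(t)/g''(t) and t *)
  set (c := (f2 t / g2 t + t) / 2).
  assert (Hh : f2 t - c * g2 t = (f2 t - t * g2 t) / 2) by (unfold c; field; lra).
  assert (Htc : (t - c) * (2 * g2 t) = t * g2 t - f2 t) by (unfold c; field; lra).
  assert (Hdist : 0 < Rabs (t - c)) by (apply Rabs_pos_lt; intro; nra).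
  destruct (Lambda_sign_near I f f1 f2 g g1 g2 c t (Rabs (t - c)) HI HInd It
              Hdist Hf Hg Hg2 ltac:(rewrite Hh; lra))
    as [a [b [Ia [Ib [Hab [Ha [Hb Hsign]]]]]]].
  specialize (Hbd a b Ia Ib Hab). rewrite Hh in Hsign.
  apply Rabs_def2 in Ha as [_ Ha]. apply Rabs_def2 in Hb as [Hb _].
  destruct (Rlt_or_le (f2 t) (t * g2 t)) as [Hlt|Hge].
  - (* then c < a, yet Lambda < c *)
    assert (c < t) by nra.
    rewrite Rabs_right in Ha by lra.
    assert (Lambda f g a b - c < 0) by nra. lra.
  - (* then b < c, yet Lambda > c *)
    assert (t < c) by nra.
    rewrite Rabs_left in Hb by lra.
    assert (0 < Lambda f g a b - c) by nra. lra.
Qed.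

Theorem theorem1 (I : R -> Prop) (HI : is_interval I) (HInd : nondegenerate I)
  (f f1 f2 g g1 g2 : R -> R)
  (Hf : C2_on I f f1 f2) (Hg : C2_on I g g1 g2)
  (Hg2 : forall t, I t -> 0 < g2 t) :
  (forall a b, I a -> I b -> a <> b ->
     Rmin a b <= Lambda f g a b <= Rmax a b) <->
  (forall t, I t -> f2 t = t * g2 t).
Proof.
  split.
  - intros Hbd. apply (f2_eq_of_Lambda_between I f f1 f2 g g1 g2 HI HInd Hf Hg Hg2).
    intros a b Ia Ib Hab. specialize (Hbd a b Ia Ib ltac:(lra)).
    rewrite Rmin_left, Rmax_right in Hbd by lra. exact Hbd.
  - intros Heq a b Ia Ib Hne.
    destruct (Rlt_or_le a b) as [Hab|Hba].
    + rewrite Rmin_left, Rmax_right by lra.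
      exact (Lambda_between I f f1 f2 g g1 g2 a b HI Ia Ib Hab Hf Hg Hg2 Heq).
    + rewrite Rmin_right, Rmax_left, Lambda_sym by lra.
      exact (Lambda_between I f f1 f2 g g1 g2 b a HI Ib Ia ltac:(lra) Hf Hg Hg2 Heq).
Qed.
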